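(* Let $M$ be a finite rectangular monoid, $k$ a field, and $e\in E(M)$. Then $(emene,emne)\in\mathrm{rad}^2(M)$ for all $m,n\in M$. In particular, if $B$ is a finite band, then $B/\mathrm{rad}^2(B)$ is a regular band.
   Context: $E(M)$ is the set of idempotents; $M$ is rectangular if each set $\{f\in E(M): MfM=MeM\}$ is closed under multiplication. $\mathrm{rad}^2(M)$ is the congruence on $M$ given by $(m,n)\in\mathrm{rad}^2(M)$ iff $m-n\in\mathrm{rad}(kM)^2$, where $\mathrm{rad}$ is the Jacobson radical. A band is a monoid in which every element is idempotent (bands are rectangular); a regular band is a band satisfying $xyxzx=xyzx$ for all $x,y,z$. *)

From mathcomp Require Import all_boot all_algebra.
Set Implicit Arguments. Unset Strict Implicit. Unset Printing Implicit Defensive.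
Import GRing.Theory.
Local Open Scope ring_scope.

(* The monoid algebra kM is realised as {ffun M -> k} with the usual
   (pointwise) k-vector-space structure and convolution product. *)
Section MonoidAlgebra.
Variables (k : fieldType) (M : finType) (mul : M -> M -> M) (one : M).

Definition monoid_assoc := forall a b c, mul a (mul b c) = mul (mul a b) c.
Definition monoid_unit := forall a, mul one a = a /\ mul a one = a.

Definition mconv (f g : {ffun M -> k}) : {ffun M -> k} :=
  [ffun m => \sum_(a : M) \sum_(b : M | mul a b == m) f a * g b].

Definition mdelta (m : M) : {ffun M -> k} := [ffun x => (x == m)%:R].

Definition is_left_ideal (I : {ffun M -> k} -> Prop) :=
  [/\ I 0, (forall x y, I x -> I y -> I (x + y)) &
      (forall a x, I x -> I (mconv a x))].

Definition is_maximal_left_ideal (I : {ffun M -> k} -> Prop) :=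
  [/\ is_left_ideal I, (exists x, ~ I x) &
      (forall J, is_left_ideal J -> (forall x, I x -> J x) ->
                 (exists x, ~ J x) -> forall x, J x -> I x)].

Definition jacobson_rad (x : {ffun M -> k}) : Prop :=
  forall I, is_maximal_left_ideal I -> I x.

Definition rad_sq (x : {ffun M -> k}) : Prop :=
  exists s : seq ({ffun M -> k} * {ffun M -> k}),
    (forall p, p \in s -> jacobson_rad p.1 /\ jacobson_rad p.2) /\
    x = \sum_(p <- s) mconv p.1 p.2.

Definition rad2_rel (m n : M) : Prop := rad_sq (mdelta m - mdelta n).

Definition is_idem (e : M) := mul e e = e.

Definition same_J (f e : M) :=
  forall x, (exists a b, x = mul (mul a f) b) <-> (exists a b, x = mul (mul a e) b).

Definition rectangular :=
  forall e f g, is_idem e -> is_idem f -> is_idem g ->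
    same_J f e -> same_J g e -> is_idem (mul f g) /\ same_J (mul f g) e.

Definition band := forall x, is_idem x.

End MonoidAlgebra.

From Stdlib Require Import Classical.
From mathcomp Require Import all_boot all_algebra ring.
Set Implicit Arguments. Unset Strict Implicit. Unset Printing Implicit Defensive.
Import GRing.Theory.

(* For an idempotent [e], [(em - eme)(ene - ne) = emene - emne] in kM, so it
   suffices that both factors lie in rad(kM).  Call [x] in kM balanced when, for
   every idempotent [f], the coefficients of [x] sum to zero on each fibre of
   [t |-> f t f] over the J-class J_f of [f].  In a rectangular monoid J_f is a
   regular J-class whose idempotents form a rectangular band, so [x f y = x y]
   and [f s t f = (f s f)(f t f)] inside J_f; hence balanced elements form a
   left ideal.  A balanced element is nilpotent: its cube vanishes on a maximal
   J-class of its support ideal (the coefficients there are fibre sums when the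
   class contains an idempotent, and the class contains no products of its own
   elements otherwise), so the support ideal shrinks.  A left ideal of nilpotent
   elements lies in the Jacobson radical, and [em - eme], [ene - ne] are balanced
   because [f em f = f eme f] and [f ene f = f ne f] as soon as one side lies in
   J_f.  Finite bands are rectangular, and [e := x] gives [xyxzx = xyzx]. *)

Section Monoid.
Variables (M : finType) (mul : M -> M -> M) (one : M).
Hypotheses (massoc : monoid_assoc mul) (munit : monoid_unit mul one).
Local Notation "a ** b" := (mul a b) (at level 40, left associativity).

Lemma mulmA a b c : a ** (b ** c) = a ** b ** c. Proof. exact: massoc. Qed.
Lemma mul1m a : one ** a = a. Proof. by case: (munit a). Qed.
Lemma mulm1 a : a ** one = a. Proof. by case: (munit a). Qed.

Lemma mulm_idem_l e a : e ** e = e -> e ** (e ** a) = e ** a.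
Proof. by move=> ee; rewrite mulmA ee. Qed.

Lemma mulm_idem_r e a : e ** e = e -> a ** e ** e = a ** e.
Proof. by move=> ee; rewrite -mulmA ee. Qed.

Definition mpow x n := iter n (mul x) one.

Lemma mpowD x a b : mpow x (a + b) = mpow x a ** mpow x b.
Proof.
elim: a => [|a IH]; first by rewrite add0n mul1m.
by rewrite addSn /mpow !iterS -/(mpow x _) IH mulmA.
Qed.

Lemma mpowSr x n : mpow x n.+1 = mpow x n ** x.
Proof. by rewrite -addn1 mpowD /mpow /= mulm1. Qed.

Lemma exists_idem_mpow x : exists2 n, 0 < n & mpow x n ** mpow x n = mpow x n.
Proof.
pose g (i : 'I_#|M|.+1) := mpow x i.+1.
have /injectivePn [i [j nij eqg]] : ~~ injectiveb g.
  apply/negP => /injectiveP inj; have := leq_card g inj.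
  by rewrite card_ord ltnn.
wlog lt_ij : i j nij eqg / i < j.
  move=> hw; case: (ltngtP i j) => h; first exact: hw h.
  - by apply: (hw j i); rewrite 1?eq_sym.
  - by move: nij; rewrite (val_inj h) eqxx.
(* [x^q] with [q = i + 1] is periodic with period [p = j - i] from then on;
   [q * p] is a multiple of the period that is at least [q]. *)
pose p := j - i; pose q := i.+1.
have p_gt0 : 0 < p by rewrite subn_gt0.
have period : mpow x (q + p) = mpow x q.
  by rewrite addSn subnKC ?(ltnW lt_ij) // -[RHS]/(g i) eqg.
have periodic s r : mpow x (q + s + r * p) = mpow x (q + s).
  elim: r => [|r IH]; first by rewrite mul0n addn0.
  rewrite mulSn addnA (addnAC q s p) -(addnA (q + p)) mpowD period.
  by rewrite -mpowD addnA IH.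
have q_le : q <= q * p by rewrite leq_pmulr.
exists (q * p); first by rewrite muln_gt0.
by rewrite -mpowD -{1}(subnKC q_le) periodic subnKC.
Qed.

Lemma sandwich_mpow a x b n : x = a ** x ** b -> x = mpow a n ** x ** mpow b n.
Proof.
move=> E; elim: n => [|n IH]; first by rewrite mul1m mulm1.
have -> : mpow a n.+1 ** x ** mpow b n.+1 = a ** (mpow a n ** x ** mpow b n) ** b.
  by rewrite (mpowSr b) /mpow iterS !mulmA.
by rewrite -IH.
Qed.

Definition leJ u v := [exists a, exists b, u == a ** v ** b].

Lemma leJP u v : reflect (exists a b, u = a ** v ** b) (leJ u v).
Proof.
apply: (iffP existsP) => [[a /existsP [b /eqP E]]|[a [b E]]]; first by exists a, b.
by exists a; apply/existsP; exists b; apply/eqP.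
Qed.

Lemma leJ_refl u : leJ u u.
Proof. by apply/leJP; exists one, one; rewrite mul1m mulm1. Qed.

Lemma leJ_trans v u w : leJ u v -> leJ v w -> leJ u w.
Proof.
move=> /leJP [a [b ->]] /leJP [c [d ->]]; apply/leJP; exists (a ** c), (d ** b).
by rewrite !mulmA.
Qed.

Lemma leJ_mulr u v : leJ (u ** v) u.
Proof. by apply/leJP; exists one, v; rewrite mul1m. Qed.

Lemma leJ_mull u v : leJ (u ** v) v.
Proof. by apply/leJP; exists u, one; rewrite mulm1. Qed.

Lemma leJ_mul2 a u b : leJ (a ** u ** b) u.
Proof. by apply/leJP; exists a, b. Qed.

Definition jeq u v := leJ u v && leJ v u.

Lemma jeq_refl u : jeq u u.
Proof. by rewrite /jeq leJ_refl. Qed.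

Lemma jeq_sym u v : jeq u v = jeq v u.
Proof. by rewrite /jeq andbC. Qed.

Lemma jeq_trans v u w : jeq u v -> jeq v w -> jeq u w.
Proof.
by case/andP=> h1 h2 /andP [h3 h4]; rewrite /jeq (leJ_trans h1 h3) (leJ_trans h4 h2).
Qed.

Lemma jeq_between u v w : jeq u v -> leJ v w -> leJ w u -> jeq u w.
Proof. by case/andP=> h1 h2 h3 h4; rewrite /jeq h4 (leJ_trans h1 h3). Qed.

Lemma sandwich_idem_r a x b : x = a ** x ** b ->
  exists w, b ** w ** (b ** w) = b ** w /\ x = x ** b ** w.
Proof.
move=> E; have [[|n] // _ idem] := exists_idem_mpow b.
have := sandwich_mpow n.+1 E; have PE : mpow b n.+1 = b ** mpow b n by [].
move: (mpow b n.+1) idem PE => P idem PE S.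
exists (mpow b n); rewrite -PE -mulmA -PE; split=> //.
by rewrite {2}S -mulmA idem.
Qed.

Lemma sandwich_l a x b : x = a ** x ** b -> exists w, x = w ** a ** x.
Proof.
move=> E; have [[|n] // _ idem] := exists_idem_mpow a.
have := sandwich_mpow n.+1 E; have := mpowSr a n.
move: (mpow a n.+1) (mpow b n.+1) idem => P Q idem PE S.
by exists (mpow a n); rewrite -PE {2}S !mulmA idem.
Qed.

Lemma stable_r u v : leJ u (u ** v) -> exists w, u = u ** v ** w.
Proof.
move=> /leJP [a [b E]].
have [|w [_ Ew]] := @sandwich_idem_r a u (v ** b); first by rewrite {1}E !mulmA.
by exists (b ** w); rewrite {1}Ew !mulmA.
Qed.

Lemma stable_l u v : leJ v (u ** v) -> exists w, v = w ** u ** v.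
Proof.
move=> /leJP [a [b E]].
have [|w Ew] := @sandwich_l (a ** u) v b; first by rewrite {1}E !mulmA.
by exists (w ** a); rewrite {1}Ew !mulmA.
Qed.

Lemma Jclass_idem_of_mid s t u : leJ t (s ** t ** u) -> leJ u t ->
  exists2 E, E ** E = E & jeq t E.
Proof.
move=> /leJP [p [q E]] ut.
have [|w [idem Ew]] := @sandwich_idem_r (p ** s) t (u ** q).
  by rewrite {1}E !mulmA.
exists (u ** q ** w) => //; apply/andP; split; first by rewrite {1}Ew -mulmA leJ_mull.
by apply: leJ_trans ut; rewrite -!mulmA leJ_mulr.
Qed.

Lemma regular_idem x x' : x = x ** x' ** x ->
  x' ** x ** (x' ** x) = x' ** x /\ x ** x' ** (x ** x') = x ** x'.
Proof.
by move=> E; split; [rewrite -mulmA (mulmA x) -E | rewrite mulmA -E].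
Qed.

Lemma band_rectangular : band mul -> rectangular mul.
Proof.
move=> bnd e f g _ _ _ Sfe Sge; split; first exact: bnd.
have [a [b Ef]] : exists a b, f = a ** g ** b.
  by apply/(Sge f)/(Sfe f); exists one, one; rewrite mulm1 mul1m.
(* [f = a (g b f)] with [g b f] idempotent, so [g b f] fixes [f] on the right. *)
have Ef' : f = a ** (g ** b ** f) by rewrite !mulmA -Ef bnd.
have fV : f ** (g ** b ** f) = f by rewrite {1}Ef' -mulmA bnd -Ef'.
have f_fg : f = f ** g ** (b ** f) by rewrite -{1}fV !mulmA.
move=> x; split=> [[a' [b' ->]] | /(Sfe x) [a' [b' ->]]].
  by apply/(Sfe _); exists a', (g ** b'); rewrite !mulmA.
by exists a', (b ** f ** b'); rewrite {1}f_fg !mulmA.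
Qed.

Hypothesis rect : rectangular mul.

Lemma jeq_same_J e g : jeq e g -> same_J mul g e.
Proof.
case/andP=> eg ge x; split=> /leJP xle; apply/leJP.
  exact: leJ_trans xle ge.
exact: leJ_trans xle eg.
Qed.

Section IdempotentJclass.
Variable f : M.
Hypothesis ff : f ** f = f.
Local Notation J x := (jeq f x).

Ltac leJ_by a b := apply/leJP; exists a, b; rewrite ?mul1m ?mulm1 ?mulmA //.

Lemma idem_mul_Jclass g h : g ** g = g -> h ** h = h -> J g -> J h ->
  g ** h ** (g ** h) = g ** h /\ J (g ** h).
Proof.
move=> gg hh Jg Jh.
have [-> S] := rect ff gg hh (jeq_same_J Jg) (jeq_same_J Jh).
by split=> //; apply/andP; split; apply/leJP; apply/S; exists one, one;
  rewrite mul1m mulm1.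
Qed.

Lemma Jclass_regular x : J x -> exists x', x = x ** x' ** x.
Proof.
case/andP=> /leJP [a [b Ef]] xf.
have [w E1] : exists w, x = w ** a ** x.
  apply: stable_l; apply: leJ_trans xf _; rewrite Ef; exact: leJ_mulr.
have [w' E2] : exists w', a ** x = a ** x ** b ** w'.
  apply: stable_r; rewrite -Ef; apply: leJ_trans xf; exact: leJ_mull.
have Fax : f ** (a ** x) = a ** x by rewrite E2 -Ef mulm_idem_l.
exists (b ** a).
have -> : x ** (b ** a) ** x = w ** (f ** (a ** x)) by rewrite Ef {1}E1 !mulmA.
by rewrite Fax mulmA -E1.
Qed.

Lemma Jclass_regular_idem x : J x -> exists x',
  [/\ x = x ** x' ** x, x' ** x ** (x' ** x) = x' ** x,
      x ** x' ** (x ** x') = x ** x', J (x' ** x) & J (x ** x')].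
Proof.
move=> Jx; have [x' Ex] := Jclass_regular Jx; exists x'.
have [ir il] := regular_idem Ex; have /andP [_ xf] := Jx.
split=> //; apply: (jeq_between Jx).
- by rewrite {1}Ex -mulmA leJ_mull.
- exact: leJ_trans (leJ_mull _ _) xf.
- by rewrite {1}Ex leJ_mulr.
- exact: leJ_trans (leJ_mulr _ _) xf.
Qed.

Lemma Jclass_idem_rect a b : a ** a = a -> b ** b = b -> J a -> J b ->
  a ** b ** a = a.
Proof.
move=> aa bb Ja Jb.
have [iab Jab] := idem_mul_Jclass aa bb Ja Jb.
have [ip Jp] := idem_mul_Jclass iab aa Jab Ja.
have [w Ew] : exists w, a = w ** (a ** b) ** a.
  apply: stable_l; case/andP: Jp => h _; case/andP: Ja => _ h'.
  exact: leJ_trans h' h.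
have Ew' : a = w ** (a ** b ** a) by rewrite {1}Ew !mulmA.
have Ep : a ** (a ** b ** a) = a ** b ** a by rewrite !mulmA aa.
have {}Ew : a = a ** b ** a by rewrite {1}Ew' -{1}ip mulmA -Ew' Ep.
by rewrite -Ew.
Qed.

Lemma Jclass_idem_rect3 a b c : a ** a = a -> b ** b = b -> c ** c = c ->
  J a -> J b -> J c -> a ** b ** c = a ** c.
Proof.
move=> aa bb cc Ja Jb Jc.
have [ibc Jbc] := idem_mul_Jclass bb cc Jb Jc.
rewrite -{1}(Jclass_idem_rect cc aa Jc Ja) !mulmA.
have -> : a ** b ** c ** a = a ** (b ** c) ** a by rewrite !mulmA.
by rewrite Jclass_idem_rect.
Qed.

Lemma Jclass_mul_idem x y : J x -> J y -> x ** f ** y = x ** y.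
Proof.
move=> Jx Jy.
have [x' [Ex ix _ Jx' _]] := Jclass_regular_idem Jx.
have [y' [Ey _ iy _ Jy']] := Jclass_regular_idem Jy.
have -> : x ** f ** y = x ** (x' ** x ** f ** (y ** y')) ** y.
  by rewrite {1}Ex {1}Ey !mulmA.
rewrite (Jclass_idem_rect3 ix ff iy Jx' (jeq_refl f) Jy').
have -> : x ** (x' ** x ** (y ** y')) ** y = x ** x' ** x ** (y ** y' ** y).
  by rewrite !mulmA.
by rewrite -Ex -Ey.
Qed.

Lemma Jclass_mul x y : J x -> J y -> J (x ** y).
Proof.
move=> Jx Jy.
have [x' [Ex ix _ Jx' _]] := Jclass_regular_idem Jx.
have [y' [Ey _ iy _ Jy']] := Jclass_regular_idem Jy.
have [_ /andP [fle _]] := idem_mul_Jclass ix iy Jx' Jy'.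
apply/andP; split.
  by apply: leJ_trans fle _; apply/leJP; exists x', y'; rewrite !mulmA.
by case/andP: Jx => _ xf; apply: leJ_trans (leJ_mulr _ _) xf.
Qed.

Lemma Jclass_mul_corner s t u : J s -> J t -> J u ->
  s ** t ** u = s ** (f ** t ** f) ** u.
Proof.
move=> Js Jt Ju.
have -> : s ** (f ** t ** f) ** u = s ** f ** (t ** f ** u) by rewrite !mulmA.
by rewrite (Jclass_mul_idem Jt Ju) (Jclass_mul_idem Js (Jclass_mul Jt Ju)) mulmA.
Qed.

Lemma corner_mul s t : J (f ** s ** f) -> J (f ** t ** f) ->
  f ** s ** t ** f = f ** s ** f ** (f ** t ** f).
Proof.
move=> Js Jt.
have Jfs : J (f ** s) by apply: jeq_between Js (leJ_mulr _ _) (leJ_mulr _ _).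
have Jtf : J (t ** f).
  by apply: jeq_between Jt _ (leJ_mull _ _); rewrite -mulmA leJ_mull.
rewrite !mulmA (mulm_idem_r _ ff) -(mulmA (f ** s ** f)) (Jclass_mul_idem Jfs Jtf).
by rewrite !mulmA.
Qed.

Lemma corner_mul_Jclass s t : J (f ** s ** t ** f) ->
  J (f ** s ** f) /\ J (f ** t ** f).
Proof.
move=> Jst.
have Jfs : J (f ** s).
  by apply: jeq_between Jst _ (leJ_mulr _ _); leJ_by one (t ** f).
have Jtf : J (t ** f).
  by apply: jeq_between Jst _ (leJ_mull _ _); leJ_by (f ** s) one.
split; first exact: Jclass_mul Jfs (jeq_refl f).
by rewrite -mulmA; apply: Jclass_mul (jeq_refl f) Jtf.
Qed.

Lemma corner_idem e : e ** e = e -> J (e ** f) -> f ** e ** f = f.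
Proof.
move=> ee Jef.
have Jfef : J (f ** e ** f) by rewrite -mulmA; apply: Jclass_mul (jeq_refl f) Jef.
have Jfe : J (f ** e) by apply: jeq_between Jfef (leJ_mulr _ _) (leJ_mulr _ _).
have ip : f ** e ** f ** (f ** e ** f) = f ** e ** f.
  rewrite !mulmA (mulm_idem_r _ ff) -(mulmA _ e f) (Jclass_mul_idem Jfe Jef).
  by rewrite mulmA (mulm_idem_r _ ee).
have [w Ew] : exists w, f = f ** (e ** f) ** w.
  by apply: stable_r; rewrite mulmA; case/andP: Jfef.
have {}Ew : f = f ** e ** f ** w by rewrite {1}Ew mulmA.
have -> : f ** e ** f = f ** e ** f ** (f ** e ** f ** w).
  by rewrite -Ew (mulm_idem_r _ ff).
by rewrite mulmA ip -Ew.
Qed.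

Lemma corner_em e m : e ** e = e ->
  J (f ** (e ** m) ** f) || J (f ** (e ** m ** e) ** f) ->
  f ** (e ** m) ** f = f ** (e ** m ** e) ** f.
Proof.
move=> ee H.
have Jfem : J (f ** e ** m).
  have fem_le : leJ (f ** e ** m) f by rewrite -mulmA leJ_mulr.
  case/orP: H => h; apply: (jeq_between h _ fem_le).
    by rewrite mulmA leJ_mulr.
  by leJ_by one (e ** f).
have Jfe : J (f ** e) by apply: jeq_between Jfem (leJ_mulr _ _) (leJ_mulr _ _).
have Jef : J (e ** f).
  apply: jeq_between (Jclass_mul Jfe (jeq_refl f)) _ (leJ_mull _ _).
  by rewrite -mulmA leJ_mull.
have E := corner_idem ee Jef.
have -> : f ** (e ** m) ** f = f ** e ** m ** (f ** e ** f) by rewrite E !mulmA.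
have -> : f ** (e ** m ** e) ** f = f ** e ** m ** (e ** f) by rewrite !mulmA.
by rewrite -(Jclass_mul_idem Jfem Jef) !mulmA.
Qed.

Lemma corner_ne e n : e ** e = e ->
  J (f ** (e ** n ** e) ** f) || J (f ** (n ** e) ** f) ->
  f ** (e ** n ** e) ** f = f ** (n ** e) ** f.
Proof.
move=> ee H.
have Jnef : J (n ** e ** f).
  case/orP: H => h; apply: (jeq_between h _ (leJ_mull _ _)).
    by leJ_by (f ** e) one.
  by leJ_by f one.
have Jef : J (e ** f).
  by apply: jeq_between Jnef _ (leJ_mull _ _); rewrite -mulmA leJ_mull.
have E := corner_idem ee Jef.
have Jfe : J (f ** e).
  by rewrite /jeq leJ_mulr andbT -{1}E leJ_mulr.
have -> : f ** (n ** e) ** f = f ** e ** f ** (n ** e ** f) by rewrite E !mulmA.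
have -> : f ** (e ** n ** e) ** f = f ** e ** (n ** e ** f) by rewrite !mulmA.
exact: esym (Jclass_mul_idem Jfe Jnef).
Qed.

End IdempotentJclass.

Section Algebra.
Variable k : fieldType.
Local Notation A := {ffun M -> k}.
Local Notation mc := (mconv mul).
Local Notation dl := (mdelta k).
Local Open Scope ring_scope.

Lemma mconvE (f g : A) m :
  mc f g m = \sum_a \sum_b ((a ** b == m)%:R * (f a * g b)).
Proof.
rewrite ffunE; apply: eq_bigr => a _; rewrite big_mkcond; apply: eq_bigr => b _.
by case: eqP; rewrite ?mul1r ?mul0r.
Qed.

Lemma sum_pick_l (y : M) (F : M -> k) : \sum_x ((y == x)%:R * F x) = F y.
Proof.
rewrite (bigD1 y) //= eqxx mul1r big1 ?addr0 // => x nx.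
by rewrite eq_sym (negbTE nx) mul0r.
Qed.

Lemma sum_pick_r (y : M) (F : M -> k) : \sum_x ((x == y)%:R * F x) = F y.
Proof. by rewrite -(sum_pick_l y); apply: eq_bigr => x _; rewrite eq_sym. Qed.

Lemma mconvDl (f1 f2 g : A) : mc (f1 + f2) g = mc f1 g + mc f2 g.
Proof.
apply/ffunP => m; rewrite !ffunE -big_split; apply: eq_bigr => a _.
by rewrite -big_split; apply: eq_bigr => b _; rewrite ffunE mulrDl.
Qed.

Lemma mconvDr (f g1 g2 : A) : mc f (g1 + g2) = mc f g1 + mc f g2.
Proof.
apply/ffunP => m; rewrite !ffunE -big_split; apply: eq_bigr => a _.
by rewrite -big_split; apply: eq_bigr => b _; rewrite ffunE mulrDr.
Qed.

Lemma mconvNl (f g : A) : mc (- f) g = - mc f g.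
Proof.
apply/ffunP => m; rewrite !ffunE -sumrN; apply: eq_bigr => a _.
by rewrite -sumrN; apply: eq_bigr => b _; rewrite ffunE mulNr.
Qed.

Lemma mconvNr (f g : A) : mc f (- g) = - mc f g.
Proof.
apply/ffunP => m; rewrite !ffunE -sumrN; apply: eq_bigr => a _.
by rewrite -sumrN; apply: eq_bigr => b _; rewrite ffunE mulrN.
Qed.

Lemma mconv0l (g : A) : mc 0 g = 0.
Proof.
apply/ffunP => m; rewrite !ffunE big1 // => a _; rewrite big1 // => b _.
by rewrite ffunE mul0r.
Qed.

Lemma mconv0r (g : A) : mc g 0 = 0.
Proof.
apply/ffunP => m; rewrite !ffunE big1 // => a _; rewrite big1 // => b _.
by rewrite ffunE mulr0.
Qed.

Lemma mconvBl (f1 f2 g : A) : mc (f1 - f2) g = mc f1 g - mc f2 g.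
Proof. by rewrite mconvDl mconvNl. Qed.
Lemma mconvBr (f g1 g2 : A) : mc f (g1 - g2) = mc f g1 - mc f g2.
Proof. by rewrite mconvDr mconvNr. Qed.

Definition triple_conv (f g h : A) m :=
  \sum_a \sum_b \sum_c ((a ** b ** c == m)%:R * (f a * g b * h c)).

Lemma mconv_tripleL (f g h : A) m : mc (mc f g) h m = triple_conv f g h m.
Proof.
rewrite mconvE /triple_conv.
transitivity (\sum_x \sum_c \sum_a \sum_b
   ((x ** c == m)%:R * ((a ** b == x)%:R * (f a * g b)) * h c)).
  apply: eq_bigr => x _; apply: eq_bigr => c _.
  rewrite mconvE mulr_suml mulr_sumr; apply: eq_bigr => a _ /=.
  by rewrite mulr_suml mulr_sumr; apply: eq_bigr => b _; rewrite !mulrA.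
transitivity (\sum_c \sum_a \sum_b \sum_x
   ((x ** c == m)%:R * ((a ** b == x)%:R * (f a * g b)) * h c)).
  rewrite exchange_big; apply: eq_bigr => c _.
  rewrite exchange_big; apply: eq_bigr => a _.
  by rewrite exchange_big.
rewrite exchange_big; apply: eq_bigr => a _.
rewrite exchange_big; apply: eq_bigr => b _.
apply: eq_bigr => c _.
rewrite -(sum_pick_l (a ** b) (fun x => (x ** c == m)%:R * (f a * g b * h c))).
by apply: eq_bigr => x _; ring.
Qed.

Lemma mconv_tripleR (f g h : A) m : mc f (mc g h) m = triple_conv f g h m.
Proof.
rewrite mconvE /triple_conv.
transitivity (\sum_a \sum_y \sum_b \sum_c
   ((a ** y == m)%:R * (f a * ((b ** c == y)%:R * (g b * h c))))).
  apply: eq_bigr => a _; apply: eq_bigr => y _.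
  rewrite mconvE mulr_sumr mulr_sumr; apply: eq_bigr => b _ /=.
  by rewrite mulr_sumr mulr_sumr.
apply: eq_bigr => a _.
rewrite exchange_big; apply: eq_bigr => b _.
rewrite exchange_big; apply: eq_bigr => c _.
rewrite -mulmA -(sum_pick_l (b ** c) (fun y => (a ** y == m)%:R * (f a * g b * h c))).
by apply: eq_bigr => x _; ring.
Qed.

Lemma mconvA (f g h : A) : mc (mc f g) h = mc f (mc g h).
Proof. by apply/ffunP => m; rewrite mconv_tripleL mconv_tripleR. Qed.

Lemma mconv_delta a b : mc (dl a) (dl b) = dl (a ** b).
Proof.
apply/ffunP => m; rewrite mconvE [RHS]ffunE.
rewrite (eq_bigr (fun x => (a == x)%:R * ((x ** b == m)%:R))).
  by rewrite (sum_pick_l a (fun x => (x ** b == m)%:R)) eq_sym.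
move=> x _; rewrite (eq_bigr (fun y => (b == y)%:R * ((x ** y == m)%:R * (a == x)%:R))).
  by rewrite (sum_pick_l b (fun y => (x ** y == m)%:R * (a == x)%:R)) mulrC.
by move=> y _; rewrite !ffunE (eq_sym y) (eq_sym x); ring.
Qed.

Lemma mconv1l (g : A) : mc (dl one) g = g.
Proof.
apply/ffunP => m; rewrite mconvE.
rewrite (eq_bigr (fun x => (one == x)%:R * (\sum_b ((x ** b == m)%:R * g b)))).
  rewrite (sum_pick_l one (fun x => \sum_b ((x ** b == m)%:R * g b))).
  under eq_bigr => b _ do rewrite mul1m.
  by rewrite (sum_pick_r m g).
move=> x _; rewrite mulr_sumr; apply: eq_bigr => b _; rewrite !ffunE (eq_sym x one); ring.
Qed.

Lemma mconv1r (g : A) : mc g (dl one) = g.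
Proof.
apply/ffunP => m; rewrite mconvE.
rewrite (eq_bigr (fun x => g x * (x == m)%:R)).
  by rewrite -(sum_pick_r m g); apply: eq_bigr => x _; rewrite mulrC.
move=> x _.
rewrite (eq_bigr (fun y => (one == y)%:R * ((x ** y == m)%:R * g x))).
  by rewrite (sum_pick_l one (fun y => (x ** y == m)%:R * g x)) mulm1 mulrC.
by move=> y _; rewrite !ffunE (eq_sym y one); ring.
Qed.

Fixpoint cpow (z : A) n := if n is n'.+1 then mc (cpow z n') z else dl one.

Lemma cpowD z a b : cpow z (a + b) = mc (cpow z a) (cpow z b).
Proof.
elim: b => [|b IH]; first by rewrite addn0 /= mconv1r.
by rewrite addnS /= IH mconvA.
Qed.

Lemma cpowM z a n : cpow (cpow z a) n = cpow z (a * n).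
Proof.
elim: n => [|n IH]; first by rewrite muln0.
by rewrite /= IH mulnS addnC cpowD.
Qed.

Lemma mconv_geom z n : mc (\sum_(j < n) cpow z j) (dl one - z) = dl one - cpow z n.
Proof.
elim: n => [|n IH]; first by rewrite big_ord0 mconv0l /= subrr.
by rewrite big_ord_recr /= mconvDl IH mconvBr mconv1r addrA subrK.
Qed.

Lemma is_left_ideal_addl (I : A -> Prop) x : is_left_ideal mul I ->
  is_left_ideal mul (fun z => exists i a, I i /\ z = i + mc a x).
Proof.
case=> I0 ID IM; split.
- by exists 0, 0; rewrite mconv0l addr0.
- move=> _ _ [i1 [a1 [Ii1 ->]]] [i2 [a2 [Ii2 ->]]].
  by exists (i1 + i2), (a1 + a2); rewrite mconvDl addrACA; split; first exact: ID.
- move=> b _ [i [a [Ii ->]]].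
  by exists (mc b i), (mc b a); rewrite mconvDr mconvA; split; first exact: IM.
Qed.

(* If [x] avoided a maximal left ideal [I], then [I + kM x] would be everything,
   so [1 = i + a x] with [i] in [I]; but [1 - a x] has the left inverse
   [sum_j (a x)^j] since [a x] is nilpotent, whence [1] lies in [I]. *)
Lemma jacobson_rad_of_nil (x : A) :
  (forall a, exists n, cpow (mc a x) n = 0) -> jacobson_rad mul x.
Proof.
move=> nil I maxI; have [IL [y nIy] maxIP] := maxI; have [I0 _ IM] := IL.
apply: NNPP => nIx.
pose Ix z := exists i a, I i /\ z = i + mc a x.
have sub_Ix z : I z -> Ix z by move=> Iz; exists z, 0; rewrite mconv0l addr0.
have Ix_x : Ix x by exists 0, (dl one); rewrite mconv1l add0r.
have Ix_all z : Ix z.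
  apply: NNPP => nIxz; apply: nIx.
  exact: maxIP (is_left_ideal_addl x IL) sub_Ix (ex_intro _ z nIxz) x Ix_x.
have [i [a [Ii E]]] := Ix_all (dl one); have [n Hn] := nil a.
have : I (mc (\sum_(j < n) cpow (mc a x) j) i) by apply: IM.
rewrite [i](canRL (addrK _) (esym E)) mconv_geom Hn subr0 => I1.
by apply: nIy; rewrite -(mconv1r y); apply: IM.
Qed.

Definition balanced (x : A) := forall f h, f ** f = f -> jeq f h ->
  \sum_(t | f ** t ** f == h) x t = 0.

Lemma sum_balanced_fibres (x : A) f (Q : pred M) : balanced x -> f ** f = f ->
  \sum_u ((jeq f (f ** u ** f) && Q (f ** u ** f))%:R * x u) = 0.
Proof.
move=> bx ff.
rewrite (eq_bigr (fun u => if jeq f (f ** u ** f) && Q (f ** u ** f) then x u else 0));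
  last by move=> u _; case: ifP; rewrite ?mul1r ?mul0r.
rewrite -big_mkcond (partition_big (fun u => f ** u ** f) (fun h => jeq f h && Q h)) //.
apply: big1 => h /andP [Jh Qh].
rewrite (eq_bigl (fun u => f ** u ** f == h)) ?bx // => u.
by case: eqP => [->|]; rewrite ?Jh ?Qh ?andbF.
Qed.

Lemma sum_mconv (P : pred M) (a x : A) :
  \sum_(t | P t) mc a x t = \sum_s \sum_u ((P (s ** u))%:R * (a s * x u)).
Proof.
rewrite big_mkcond.
transitivity (\sum_t \sum_s \sum_u ((s ** u == t)%:R * ((P t)%:R * (a s * x u)))).
  apply: eq_bigr => t _; rewrite mconvE.
  case: (P t).
    by apply: eq_bigr => s _; apply: eq_bigr => u _; rewrite mul1r.
  by rewrite big1 // => s _; rewrite big1 // => u _; rewrite mul0r mulr0.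
rewrite exchange_big; apply: eq_bigr => s _.
rewrite exchange_big; apply: eq_bigr => u _.
by rewrite (sum_pick_l (s ** u) (fun t => (P t)%:R * (a s * x u))).
Qed.

(* The fibre of [t |-> f t f] over [h] in the J-class of [f] is preserved by
   left multiplication, because [f s u f = (f s f) (f u f)] there. *)
Lemma balanced_mconvl (a x : A) : balanced x -> balanced (mc a x).
Proof.
move=> bx f h ff Jh.
rewrite sum_mconv big1 // => s _.
rewrite (eq_bigr (fun u => a s * ((f ** (s ** u) ** f == h)%:R * x u))); last first.
  by move=> u _; rewrite mulrCA.
rewrite -mulr_sumr.
pose Q h' := jeq f (f ** s ** f) && (f ** s ** f ** h' == h).
rewrite (eq_bigr (fun u => (jeq f (f ** u ** f) && Q (f ** u ** f))%:R * x u)).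
  by rewrite sum_balanced_fibres ?mulr0.
move=> u _.
suff -> : (f ** (s ** u) ** f == h) = jeq f (f ** u ** f) && Q (f ** u ** f) by [].
rewrite /Q (mulmA f s u).
apply/eqP/idP => [Eh | /and3P [Ju Js /eqP <-]]; last exact: corner_mul.
have Jsu : jeq f (f ** s ** u ** f) by rewrite Eh.
have [Js Ju] := corner_mul_Jclass ff Jsu.
by rewrite Ju Js -(corner_mul ff Js Ju) Eh eqxx.
Qed.

Definition ideal (I : {set M}) := forall u a b, u \in I -> a ** u ** b \in I.

Definition supp_in (I : {set M}) (x : A) := forall t, t \notin I -> x t = 0.

Lemma supp_in0 x : supp_in set0 x -> x = 0.
Proof. by move=> sx; apply/ffunP => t; rewrite ffunE sx ?inE. Qed.

Lemma supp_in_mconvl I a x : ideal I -> supp_in I x -> supp_in I (mc a x).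
Proof.
move=> idI sx t tI; rewrite mconvE big1 // => s _; apply: big1 => u _.
have [uI|/sx ->] := boolP (u \in I); last by rewrite !mulr0.
suff /negbTE -> : s ** u != t by rewrite mul0r.
by apply: contraNneq tI => <-; rewrite -[s ** u]mulm1; apply: idI.
Qed.

Section TopJclass.
Variables (I : {set M}) (t0 : M).
Hypotheses (idealI : ideal I) (t0_max : forall u, u \in I -> leJ t0 u -> leJ u t0).
Local Notation top u := (jeq t0 u).

Lemma top_up u v : u \in I -> leJ v u -> top v -> top u.
Proof.
by move=> uI vu /andP [t0v _]; have t0u := leJ_trans t0v vu; rewrite /jeq t0u t0_max.
Qed.

Lemma ideal_setD_top : ideal (I :\: [set u | top u]).
Proof.
move=> u a b; rewrite !inE => /andP [ntop uI]; rewrite idealI // andbT.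
by move: ntop; apply: contra; apply: top_up uI (leJ_mul2 a u b).
Qed.

Lemma top_factors a b c : a \in I -> b \in I -> c \in I -> top (a ** b ** c) ->
  [/\ top a, top b & top c].
Proof.
move=> aI bI cI tabc; split.
- by apply: top_up aI _ tabc; rewrite -mulmA leJ_mulr.
- exact: top_up bI (leJ_mul2 a b c) tabc.
- exact: top_up cI (leJ_mull _ _) tabc.
Qed.

Lemma top_idem_of_mul a b c : a \in I -> b \in I -> c \in I ->
  top (a ** b ** c) -> exists2 E, E ** E = E & top E.
Proof.
move=> aI bI cI tabc; have [_ tb tc] := top_factors aI bI cI tabc.
case/andP: (tb) => t0b bt0; case/andP: tabc => t0abc _; case/andP: tc => _ ct0.
have [|E idE bE] := @Jclass_idem_of_mid a b c _ (leJ_trans ct0 t0b).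
  exact: leJ_trans bt0 t0abc.
by exists E => //; apply: jeq_trans tb bE.
Qed.

Lemma top_mid_corner f a b c t : top f -> f ** f = f ->
  a \in I -> b \in I -> c \in I -> top t ->
  (a ** b ** c == t) = jeq f (f ** b ** f) && (a ** (f ** b ** f) ** c == t).
Proof.
move=> tf ff aI bI cI t_top.
have Jf u : top u -> jeq f u by rewrite jeq_sym in tf; apply: jeq_trans tf.
apply/idP/idP => [/eqP abc_t | /andP [Jfbf /eqP abc_t]].
  have tabc : top (a ** b ** c) by rewrite abc_t.
  have [ta tb tc] := top_factors aI bI cI tabc.
  have Jfbf : jeq f (f ** b ** f).
    rewrite -mulmA; apply: (Jclass_mul ff (jeq_refl f)).
    exact (Jclass_mul ff (Jf b tb) (jeq_refl f)).
  by rewrite Jfbf -(Jclass_mul_corner ff (Jf a ta) (Jf b tb) (Jf c tc)) abc_t eqxx.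
have tabc : top (a ** (f ** b ** f) ** c) by rewrite abc_t.
have ta : top a by apply: top_up aI _ tabc; rewrite -!mulmA leJ_mulr.
have tc : top c by apply: top_up cI (leJ_mull _ _) tabc.
have tb : top b := top_up bI (leJ_mul2 f b f) (jeq_trans tf Jfbf).
by rewrite (Jclass_mul_corner ff (Jf a ta) (Jf b tb) (Jf c tc)) abc_t eqxx.
Qed.

(* With an idempotent [f] in the top J-class, summing over [b] runs over fibres
   of [b |-> f b f]; without one, no [a b c] lands in the top J-class. *)
Lemma sum_mid_top (x : A) a c t : balanced x -> supp_in I x ->
  a \in I -> c \in I -> top t -> \sum_b ((a ** b ** c == t)%:R * x b) = 0.
Proof.
move=> bx sx aI cI t_top.
have [/existsP [f /andP [tf /eqP ff]] | /existsPn noE] :=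
  boolP [exists f, top f && (f ** f == f)].
  rewrite -[RHS](sum_balanced_fibres (fun h => a ** h ** c == t) bx ff).
  apply: eq_bigr => b _; have [bI|/sx ->] := boolP (b \in I); last by rewrite !mulr0.
  by rewrite (top_mid_corner tf ff aI bI cI t_top).
apply: big1 => b _; have [bI|/sx ->] := boolP (b \in I); last by rewrite mulr0.
case: eqP => [abc_t|]; last by rewrite mul0r.
have tabc : top (a ** b ** c) by rewrite abc_t.
have [E idE tE] := top_idem_of_mul aI bI cI tabc.
by move: (noE E); rewrite tE idE eqxx.
Qed.

Lemma cube_top (x : A) t : balanced x -> supp_in I x -> top t ->
  mc (mc x x) x t = 0.
Proof.
move=> bx sx t_top; rewrite mconv_tripleL /triple_conv.
apply: big1 => a _; rewrite exchange_big; apply: big1 => c _.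
have [aI|/sx ->] := boolP (a \in I); last first.
  by apply: big1 => b _; rewrite !mul0r mulr0.
have [cI|/sx ->] := boolP (c \in I); last by apply: big1 => b _; rewrite !mulr0.
rewrite (eq_bigr (fun b => x a * x c * ((a ** b ** c == t)%:R * x b))).
  by rewrite -mulr_sumr sum_mid_top ?mulr0.
by move=> b _; ring.
Qed.

End TopJclass.

Lemma exists_Jmax (I : {set M}) t1 : t1 \in I ->
  exists2 t0, t0 \in I & forall u, u \in I -> leJ t0 u -> leJ u t0.
Proof.
move=> t1I.
have [t0 t0I t0max] := @arg_maxnP _ t1 (mem I) (fun t => #|[set v | leJ v t]|) t1I.
exists t0 => // u uI t0u.
have sub : [set v | leJ v t0] \subset [set v | leJ v u].
  by apply/subsetP => v; rewrite !inE => vt0; apply: leJ_trans vt0 t0u.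
have /eqP E : [set v | leJ v t0] == [set v | leJ v u].
  by rewrite eqEcard sub; apply: t0max.
have : u \in [set v | leJ v u] by rewrite inE leJ_refl.
by rewrite -E inE.
Qed.

Lemma balanced_nilpotent n : forall (I : {set M}) (x : A), (#|I| <= n)%N -> ideal I ->
  supp_in I x -> balanced x -> exists N, cpow x N = 0.
Proof.
elim: n => [|n IH] I x cI idI sx bx.
  move: cI sx; rewrite leqn0 => /eqP/cards0_eq -> /supp_in0 ->.
  by exists 1; rewrite /= mconv0r.
have [I0 | [t1 t1I]] := set_0Vmem I.
  by move: sx; rewrite I0 => /supp_in0 ->; exists 1; rewrite /= mconv0r.
(* The cube of [x] vanishes on a maximal J-class of the support ideal [I],
   so it is supported by a smaller ideal. *)
have [t0 t0I t0max] := exists_Jmax t1I.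
have cI' : (#|I :\: [set u | jeq t0 u]| <= n)%N.
  rewrite -ltnS; apply: leq_trans cI; apply/proper_card/properP.
  by split; [exact: subsetDl | exists t0; rewrite // !inE jeq_refl].
have [|N HN] := IH _ (mc (mc x x) x) cI' (ideal_setD_top idI t0max) _
  (balanced_mconvl (mc x x) bx).
  move=> t; rewrite !inE negb_and negbK => /orP [t_top | tI].
    exact (cube_top t0max bx sx t_top).
  exact (supp_in_mconvl (mc x x) idI sx tI).
by exists (3 * N); rewrite -cpowM /= mconv1l.
Qed.

Lemma balanced_jacobson_rad y : balanced y -> jacobson_rad mul y.
Proof.
move=> bal_y; apply: jacobson_rad_of_nil => a.
apply: (@balanced_nilpotent #|M| setT); first exact: max_card.
- by move=> u a' b _; rewrite in_setT.
- by move=> t; rewrite in_setT.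
- exact: balanced_mconvl.
Qed.

Lemma sum_mdelta (P : pred M) a : \sum_(t | P t) dl a t = (P a)%:R.
Proof.
rewrite big_mkcond (bigD1 a) //= ffunE eqxx big1 ?addr0; first by case: (P a).
by move=> t /negbTE nt; rewrite ffunE nt; case: (P t).
Qed.

Lemma balanced_mdeltaB u v :
  (forall f, f ** f = f -> jeq f (f ** u ** f) || jeq f (f ** v ** f) ->
     f ** u ** f = f ** v ** f) ->
  balanced (dl u - dl v).
Proof.
move=> uv f h ff Jh; have {}uv := uv f ff.
rewrite (eq_bigr (fun t => dl u t - dl v t)) => [|t _]; last by rewrite !ffunE.
rewrite sumrB !sum_mdelta.
suff -> : (f ** u ** f == h) = (f ** v ** f == h) by rewrite subrr.
by apply/eqP/eqP => E; [rewrite -uv | rewrite uv] => //; rewrite E Jh ?orbT.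
Qed.

Lemma rad2_rel_corner e m n : e ** e = e ->
  rad2_rel k mul (e ** m ** e ** n ** e) (e ** m ** n ** e).
Proof.
move=> ee.
exists [:: (dl (e ** m) - dl (e ** m ** e), dl (e ** n ** e) - dl (n ** e))]; split.
  move=> p; rewrite inE => /eqP -> /=.
  split; apply: balanced_jacobson_rad; apply: balanced_mdeltaB => f ff.
    exact: corner_em.
  exact: corner_ne.
rewrite big_seq1 /= mconvBl !mconvBr !mconv_delta !mulmA (mulm_idem_r _ ee).
by rewrite subrr subr0.
Qed.

End Algebra.
End Monoid.

Theorem mainTheorem13 :
  (forall (k : fieldType) (M : finType) (mul : M -> M -> M) (one : M),
     monoid_assoc mul -> monoid_unit mul one -> rectangular mul ->
     forall e : M, is_idem mul e ->
     forall m n : M,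
       rad2_rel k mul (mul (mul (mul (mul e m) e) n) e) (mul (mul (mul e m) n) e))
  /\
  (forall (k : fieldType) (B : finType) (mul : B -> B -> B) (one : B),
     monoid_assoc mul -> monoid_unit mul one -> band mul ->
     (* B / rad^2(B) is a regular band: it is a band (each class idempotent) *)
     (forall x : B, rad2_rel k mul (mul x x) x) /\
     (* and it satisfies xyxzx = xyzx *)
     (forall x y z : B,
        rad2_rel k mul (mul (mul (mul (mul x y) x) z) x) (mul (mul (mul x y) z) x))).
Proof.
split=> [k M mul one massoc munit rect e ee m n | k B mul one massoc munit bnd].
  exact (rad2_rel_corner massoc munit rect k m n ee).
split=> [x | x y z]; first by rewrite bnd; exists [::]; rewrite big_nil subrr.
exact (rad2_rel_corner massoc munit (band_rectangular massoc munit bnd) k y z (bnd x)).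
Qed.
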